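(* Let $f:\mathbb{R}^N\to\mathbb{R}^N$ be $C^2$, equivariant with respect to a compact group $\Gamma\subseteq O(N)$, and let $x_\ast$ be a periodic solution of $\dot x=f(x)$ with minimal period $p>0$ which is a discrete wave with $H/K\cong\mathbb{Z}_n$. Fix a spatio-temporal symmetry $h\in H$ and $b\in\mathbb{R}$, and let $m\in\{1,\dots,n\}$ be such that $\theta_h=\frac{m}{n}p$. Let $U(t,s)$, $t\ge s$, be the family of solution operators of the linear DDE $$\dot y(t)=f'(x_\ast(t))y(t)+b\,[y(t)-h\,y(t-\theta_h)],$$ and let $U_h=h^{-1}U(\tfrac{m}{n}p,0)$ be the twisted monodromy operator. Then $$U(p,0)^m=h^nU_h^n.$$
   Context: $\Gamma$-equivariance means $f(\gamma x)=\gamma f(x)$ for all $x\in\mathbb{R}^N$, $\gamma\in\Gamma$. $K=\{\gamma\in\Gamma\mid\gamma x_\ast(0)=x_\ast(0)\}$, $H=\{\gamma\in\Gamma\mid\gamma\mathcal{O}=\mathcal{O}\}$ with $\mathcal{O}$ the orbit of $x_\ast$; for $h\in H$, $\theta_h\in[0,p)$ is defined by $hx_\ast(t)=x_\ast(t+\theta_h)$. $U(t,s)$ acts on $C([-\theta_h,0],\mathbb{R}^N)$, mapping an initial history $\varphi$ at time $s$ (i.e. $y(s+\vartheta)=\varphi(\vartheta)$, $\vartheta\in[-\theta_h,0]$) to the history segment $y_t(\vartheta)=y(t+\vartheta)$ of the solution. Matrices act on this function space pointwise. *)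

From HB Require Import structures.
From mathcomp Require Import all_boot all_order all_algebra.
From mathcomp Require Import all_classical all_reals all_analysis.
Set Implicit Arguments. Unset Strict Implicit. Unset Printing Implicit Defensive.
Import Order.TTheory GRing.Theory Num.Theory.
Import numFieldNormedType.Exports.
Local Open Scope classical_set_scope.
Local Open Scope ring_scope.

Section Defs.
Variables (R : realType) (N : nat).
Notation vec := 'cV[R]_N.
Notation mat := 'M[R]_N.

Definition C2 (f : vec -> vec) : Prop :=
  (forall x, differentiable f x) /\
  (forall v x, differentiable ('D_v f) x) /\
  (forall u v, continuous ('D_u ('D_v f))).

Definition compact_subgroup_ON (Gamma : set mat) : Prop :=
  [/\ forall g, Gamma g -> g^T *m g = 1%:M,
      Gamma 1%:M,
      forall g h, Gamma g -> Gamma h -> Gamma (g *m h),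
      forall g, Gamma g -> Gamma (invmx g) &
      compact Gamma].

Definition equivariant (Gamma : set mat) (f : vec -> vec) : Prop :=
  forall g x, Gamma g -> f (g *m x) = g *m f x.

Definition periodic_solution (f : vec -> vec) (x : R -> vec) (p : R) : Prop :=
  [/\ 0 < p,
      forall t : R, is_derive t (1:R) x (f (x t)),
      forall t, x (t + p) = x t &
      forall q, 0 < q < p -> exists t, x (t + q) <> x t].

Definition Kgrp (Gamma : set mat) (x : R -> vec) : set mat :=
  [set g | Gamma g /\ g *m x 0 = x 0].
Definition Hgrp (Gamma : set mat) (x : R -> vec) : set mat :=
  [set g | Gamma g /\ (fun v => g *m v) @` (range x) = range x].

(* H/K is isomorphic to Z_n : there is a surjective homomorphism
   H -> Z/nZ (values in {0,..,n-1}) whose kernel is exactly K. *)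
Definition discrete_wave (Gamma : set mat) (x : R -> vec) (n : nat) : Prop :=
  (0 < n)%N /\
  exists phi : mat -> nat,
    [/\ forall g, Hgrp Gamma x g -> (phi g < n)%N,
        forall g h, Hgrp Gamma x g -> Hgrp Gamma x h ->
          phi (g *m h) = ((phi g + phi h) %% n)%N,
        forall k, (k < n)%N -> exists g, Hgrp Gamma x g /\ phi g = k &
        forall g, Hgrp Gamma x g -> (phi g = 0%N <-> Kgrp Gamma x g)].

Definition is_theta (x : R -> vec) (p : R) (h : mat) (th : R) : Prop :=
  0 <= th < p /\ forall t, h *m x t = x (t + th).

Definition dde_solution (f : vec -> vec) (x : R -> vec) (b : R) (h : mat)
    (th s : R) (phi : R -> vec) (y : R -> vec) : Prop :=
  [/\ {within `[s - th, +oo[, continuous y},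
      forall v, - th <= v <= 0 -> y (s + v) = phi v &
      forall t : R, s < t ->
        is_derive t (1:R) y ('d f (x t) (y t) + b *: (y t - h *m y (t - th)))].

(* U is the family of solution operators U(t,s), t >= s, acting on
   C([-th,0], R^N); functions R -> vec are identified with their
   restriction to [-th,0]. *)
Definition solution_operators (f : vec -> vec) (x : R -> vec) (b : R)
    (h : mat) (th : R) (U : R -> R -> (R -> vec) -> (R -> vec)) : Prop :=
  forall t s (phi : R -> vec), s <= t ->
    {within `[- th, 0], continuous phi} ->
    exists y, dde_solution f x b h th s phi y /\
      forall v, - th <= v <= 0 -> U t s phi v = y (t + v).

End Defs.

From HB Require Import structures.
From mathcomp Require Import all_boot all_order all_algebra.
From mathcomp Require Import all_classical all_reals all_analysis.
From mathcomp Require Import lra.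
Set Implicit Arguments. Unset Strict Implicit. Unset Printing Implicit Defensive.
Import Order.TTheory GRing.Theory Num.Theory.
Import numFieldNormedType.Exports.
Local Open Scope classical_set_scope.
Local Open Scope ring_scope.

(* U(t,s) is determined by any solution of the DDE with the given history,
   because a linear DDE with locally bounded coefficients and zero history has
   only the zero solution (on intervals shorter than the delay the delayed term
   vanishes, and a mean value estimate propagates zero forward).  A matrix g
   commuting with h and with f, such that g x*(t + T) = x*(t), maps a solution y
   to t |-> g y(t + T); hence the k-th iterate of phi |-> g U(T,0) phi is the
   history of g^k y at time kT, y being the solution from phi.  With g = 1,
   T = p this gives U(p,0)^m phi = y_(mp), with g = h^-1, T = theta_h it gives
   U_h^n phi = h^-n y_(n theta_h), and n theta_h = m p. *)

Lemma lipschitz_continuous {R : realType} (V W : normedModType R) (f : V -> W) k :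
  (forall a b, `|f a - f b| <= k * `|a - b|) -> continuous f.
Proof.
move=> fk a; apply/cvgrPdist_lt => e e0.
have k0 : 0 < `|k| + 1 by rewrite ltr_pwDr.
apply/nbhs_ballP; exists (e / (`|k| + 1)); first by rewrite /= divr_gt0.
move=> b; rewrite -ball_normE /= ltr_pdivlMr // mulrC => ab.
rewrite (le_lt_trans (fk a b)) // (le_lt_trans _ ab) // ler_wpM2r //.
by rewrite (le_trans (ler_norm k)) // lerDl.
Qed.

Section matrix_norm.
Context {R : realType}.

Lemma mx_norm_entry m n (M : 'M[R]_(m, n)) i j : `|M i j| <= `|M|.
Proof. by rewrite [leRHS]/Num.Def.normr/= mx_normrE; exact: (le_bigmax _ _ (i, j)). Qed.

Lemma mx_norm_le_entries m n (M : 'M[R]_(m, n)) c :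
  0 <= c -> (forall i j, `|M i j| <= c) -> `|M| <= c.
Proof.
move=> c0 Mc; rewrite [leLHS]/Num.Def.normr/= mx_normrE.
by apply: bigmax_le => // -[i j] _; exact: Mc.
Qed.

Lemma mx_norm_mulmx m n p (A : 'M[R]_(m, n)) (B : 'M[R]_(n, p)) :
  `|A *m B| <= n%:R * `|A| * `|B|.
Proof.
apply: mx_norm_le_entries => [|i j]; first by rewrite !mulr_ge0.
rewrite mxE (le_trans (ler_norm_sum _ _ _)) //.
rewrite -mulrA mulr_natl -[n in _ *+ n]card_ord -sumr_const.
by apply: ler_sum => k _; rewrite normrM ler_pM ?mx_norm_entry.
Qed.

Lemma mulmx_continuous m n p (A : 'M[R]_(m, n)) :
  continuous (fun B : 'M[R]_(n, p) => A *m B).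
Proof.
apply: (@lipschitz_continuous _ _ _ _ (n%:R * `|A|)) => B C.
by rewrite -mulmxBr mx_norm_mulmx.
Qed.

Lemma mulmx_exp_invmx n (A : 'M[R]_n) k : A \in unitmx -> A ^+ k * invmx A ^+ k = 1.
Proof.
move=> A_unit; have AV : GRing.comm A (invmx A) by rewrite /GRing.comm -!mulmxE mulmxV // mulVmx.
by rewrite -exprMn_comm // -mulmxE mulmxV // expr1n.
Qed.

End matrix_norm.

Lemma continuous_within_shift {R : realType} (V : normedModType R) (A : set R)
    (f : R -> V) (tau : R) :
  {within A, continuous f} ->
  {within [set t | A (t + tau)], continuous (fun t => f (t + tau))}.
Proof.
move=> /subspace_continuousP cf; apply/subspace_continuousP => t At.
have shift_t : (fun u : R => u + tau) @ t --> t + tau.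
  by apply: cvgD; [exact: cvg_id | exact: cvg_cst].
by apply: cvg_comp (cf _ At) => P /= AP; exact: shift_t _ AP.
Qed.

Section matrix_derivative.
Context {R : realType} {m n : nat}.
Implicit Types (z : R -> 'M[R]_(m, n)) (t : R).

Lemma is_derive_entry z t (dz : 'M[R]_(m, n)) i j :
  is_derive t 1 z dz -> is_derive t 1 (fun u => z u i j) (dz i j).
Proof.
move=> [zt <-]; split; first exact: (derivable_mxP _ _ _).1 zt i j.
by rewrite derive_mx // mxE.
Qed.

Lemma is_derive_mulmx_shift p (g : 'M[R]_(p, m)) z (t tau : R) (dz : 'M[R]_(m, n)) :
  is_derive (t + tau) 1 z dz ->
  is_derive t 1 (fun u => g *m z (u + tau)) (g *m dz).
Proof.
move=> [zt <-].
have quotE : (fun e : R => e^-1 *: (g *m z (e *: 1 + t + tau) - g *m z (t + tau)))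
    = (fun B => g *m B) \o (fun e : R => e^-1 *: (z (e *: 1 + (t + tau)) - z (t + tau))).
  by apply: funext => e /=; rewrite -mulmxBr -scalemxAr addrA.
have quot_cvg : (fun e : R => e^-1 *: (g *m z (e *: 1 + t + tau) - g *m z (t + tau)))
    @ 0^' --> g *m 'D_1 z (t + tau).
  by rewrite quotE; apply: continuous_cvg; [exact: mulmx_continuous | exact: zt].
by split; [apply/cvg_ex; exists (g *m 'D_1 z (t + tau)) | exact: cvg_lim].
Qed.

Lemma mx_norm_mean_value z dz a c K :
  a <= c -> 0 <= K -> {within `[a, c], continuous z} ->
  (forall t, a < t < c -> is_derive t 1 z (dz t)) ->
  (forall t, a < t < c -> `|dz t| <= K) ->
  `|z c - z a| <= K * (c - a).
Proof.
rewrite le_eqVlt => /predU1P[<- | ac] K0 zc zd dzK.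
  by rewrite !subrr normr0 mulr0.
apply: mx_norm_le_entries => [|i j]; first by rewrite mulr_ge0 // subr_ge0 ltW.
have entry_c : {within `[a, c], continuous (fun u => z u i j)}.
  exact: within_continuous_comp _ _ _ (in1W (@coord_continuous R m n i j)) zc.
have entry_d t : t \in `]a, c[ -> is_derive t 1 (fun u => z u i j) (dz t i j).
  by rewrite in_itv => /zd /is_derive_entry; exact.
have [xi /[!in_itv]/= xin] := MVT ac entry_d entry_c.
rewrite !mxE => ->.
rewrite normrM [`|c - a|]gtr0_norm ?ler_pM2r ?subr_gt0 //.
exact: le_trans (mx_norm_entry _ i j) (dzK _ xin).
Qed.

End matrix_derivative.

Lemma real_induction {R : realType} (s : R) (P : R -> Prop) :
  P s ->
  (forall t u, s <= t <= u -> P u -> P t) ->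
  (forall t, s <= t -> exists2 e, 0 < e &
     forall a, s <= a -> t - e < a <= t -> P a -> P (t + e)) ->
  forall t, s <= t -> P t.
Proof.
move=> Ps P_down P_step t st; apply: contrapT => nPt.
pose S := [set u | s <= u /\ P u].
have S_le_t u : S u -> u <= t.
  by move=> [su Pu]; rewrite leNgt; apply/negP => tu; apply/nPt/(P_down _ u); rewrite ?st ?ltW.
have supS : has_sup S by split; [exists s | exists t].
have st0 : s <= sup S by apply: sup_upper_bound.
have [e e0 stepP] := P_step _ st0.
have [a [sa Pa] ea] := sup_adherent e0 supS.
have a_le : a <= sup S by apply: sup_upper_bound.
have : sup S + e <= sup S.
  by apply: (sup_upper_bound supS); split; [lra | apply: (stepP a); rewrite ?ea ?a_le].
lra.
Qed.

Lemma linear_family_bounded_near {R : realType} {n : nat} {T : topologicalType}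
    (W : normedModType R) (L : T -> {linear 'cV[R]_n -> W}) (t0 : T) :
  (forall i, {for t0, continuous (fun u => L u (delta_mx i 0))}) ->
  exists2 C, 0 <= C & \forall u \near t0, forall w, `|L u w| <= C * `|w|.
Proof.
move=> Lc; pose g i u := L u (delta_mx i 0).
have g_near i : \forall u \near t0, `|g i u| <= `|g i t0| + 1.
  near=> u; rewrite -[g i u](subKr (g i t0)) (le_trans (ler_normB _ _)) //.
  rewrite lerD2l ltW //.
  by near: u; exact: (cvgrPdist_lt _ _).1 (Lc i) 1 ltr01.
exists (\sum_i (`|g i t0| + 1)); first by rewrite sumr_ge0 // => i _; rewrite addr_ge0.
near=> u => w.
have gu_le : forall i, `|g i u| <= `|g i t0| + 1.
  by near: u; exact: filter_forall g_near.
rewrite {1}(matrix_sum_delta w) linear_sum /= (le_trans (ler_norm_sum _ _ _)) //.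
rewrite mulr_suml; apply: ler_sum => i _.
by rewrite big_ord1 linearZ /= normrZ mulrC ler_pM ?gu_le ?mx_norm_entry.
Unshelve. all: by end_near. Qed.

Lemma diff_equivariant {R : realType} {n : nat} (f : 'cV[R]_n -> 'cV[R]_n)
    (g : 'M[R]_n) (a w : 'cV[R]_n) :
  (forall v, f (g *m v) = g *m f v) -> (forall v, differentiable f v) ->
  'd f (g *m a) (g *m w) = g *m 'd f a w.
Proof.
move=> fg fd.
apply: (etrans (esym (deriveE _ (fd _)))); apply: (etrans _ (congr1 _ (deriveE w (fd a)))).
have quotE : (fun e : R => e^-1 *: (f (e *: (g *m w) + g *m a) - f (g *m a)))
    = (fun B => g *m B) \o (fun e : R => e^-1 *: (f (e *: w + a) - f a)).
  apply: funext => e /=.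
  by rewrite scalemxAr -mulmxDr !fg -mulmxBr scalemxAr.
rewrite /derive quotE; apply: cvg_lim => //.
by apply: continuous_cvg; [exact: mulmx_continuous | exact: diff_derivable (fd a)].
Qed.

Section linear_dde_uniqueness.
Context {R : realType} {N : nat}.
Variables (A : R -> 'cV[R]_N -> 'cV[R]_N) (b : R) (h : 'M[R]_N) (th : R).
Implicit Types (z : R -> 'cV[R]_N) (a d C s : R).

Let dde_rhs z t := A t (z t) + b *: (z t - h *m z (t - th)).

(* On an interval of length at most th the delayed term still sees the zero
   history, so the mean value inequality gives max |z| <= (C + |b|) d max |z|. *)
Lemma dde_zero_short_interval z a d C :
  0 <= C -> 0 < d <= th -> (C + `|b|) * d < 1 ->
  (forall u, a <= u <= a + d -> forall w, `|A u w| <= C * `|w|) ->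
  {within `[a, a + d], continuous z} ->
  (forall t, a < t < a + d -> is_derive t 1 z (dde_rhs z t)) ->
  (forall u, a - th <= u <= a -> z u = 0) ->
  forall u, a <= u <= a + d -> z u = 0.
Proof.
move=> C0 /andP[d0 dth] small_d A_bnd zc zd z0.
have ad : a <= a + d by rewrite lerDl ltW.
have [c /[!in_itv]/= /andP[ac cad] z_max] := EVT_max ad
  (within_continuous_comp _ _ _ (in1W norm_continuous) zc).
set M := `|z c|; have M0 : 0 <= M by exact: normr_ge0.
have dz_le t : a < t < c -> `|dde_rhs z t| <= (C + `|b|) * M.
  move=> /andP[a_t t_c].
  have t_ad : a <= t <= a + d by apply/andP; split; lra.
  have zt_le : `|z t| <= M by apply: z_max; rewrite in_itv.
  rewrite /dde_rhs (z0 (t - th)); last by apply/andP; split; lra.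
  rewrite mulmx0 subr0 (le_trans (ler_normD _ _)) // normrZ mulrDl lerD //.
    by rewrite (le_trans (A_bnd t t_ad _)) // ler_wpM2l.
  by rewrite ler_wpM2l.
have M_le : M <= (C + `|b|) * M * (c - a).
  have sub_ac : `[a, c] `<=` `[a, a + d].
    by move=> u /=; rewrite !in_itv /= => /andP[u1 u2]; rewrite u1 /=; lra.
  have := mx_norm_mean_value ac _ (continuous_subspaceW sub_ac zc) _ dz_le.
  rewrite (z0 a) ?subr0; last by rewrite lexx andbT gerBl; lra.
  apply; first by rewrite mulr_ge0 // addr_ge0.
  by move=> t /andP[a_t t_c]; apply: zd; apply/andP; split; lra.
have q_lt1 : (C + `|b|) * (c - a) < 1.
  by rewrite (le_lt_trans _ small_d) // ler_wpM2l ?addr_ge0 //; lra.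
have {M_le} M_le0 : M <= 0.
  move: M_le q_lt1; rewrite mulrAC; set q := _ * (c - a); nra.
move=> u uin; apply/eqP; rewrite -normr_le0 (le_trans _ M_le0) //.
by apply: z_max; rewrite in_itv.
Qed.

Lemma dde_zero_history_unique z s :
  0 < th ->
  (forall t0 : R, exists2 C, 0 <= C &
     \forall u \near t0, forall w, `|A u w| <= C * `|w|) ->
  {within `[s - th, +oo[, continuous z} ->
  (forall u, s - th <= u <= s -> z u = 0) ->
  (forall t, s < t -> is_derive t 1 z (dde_rhs z t)) ->
  forall t, s - th <= t -> z t = 0.
Proof.
move=> th0 A_bnd zc z0 zd.
pose P t := forall u, s - th <= u <= t -> z u = 0.
suff Pt t : s <= t -> P t.
  move=> t st; have [ts | /ltW ts] := leP t s; first by apply: z0; rewrite st ts.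
  by apply: (Pt t ts); rewrite st lexx.
apply: real_induction t => [|t u /andP[st tu] Pu v /andP[v1 v2] | t0 st0].
- by move=> u; exact: z0.
- by apply: Pu; rewrite v1 (le_trans v2).
have [C C0 /nbhs_ballP [eps /= eps0 C_bnd]] := A_bnd t0.
pose K := C + `|b| + 1.
have K0 : 0 < K by rewrite ltr_wpDl // addr_ge0.
pose d := Num.min th (Num.min (eps / 2) (2 * K)^-1).
have d0 : 0 < d by rewrite !lt_min th0 divr_gt0 //= invr_gt0 mulr_gt0.
have d_th : d <= th by rewrite ge_min lexx.
have d_eps : d <= eps / 2 by rewrite !ge_min lexx orbT.
have dK : d * K <= 2^-1.
  have : d <= (2 * K)^-1 by rewrite !ge_min lexx !orbT.
  by rewrite invfM ler_pdivlMr // mulrC.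
exists (d / 2); first by rewrite divr_gt0.
move=> a sa /andP[t0a at0] Pa u /andP[u1 u2].
have [ua | au] := leP u a; first by apply: Pa; rewrite u1.
apply: (@dde_zero_short_interval z a d C C0); last by apply/andP; split; lra.
- by rewrite d0 d_th.
- by rewrite (le_lt_trans _ (_ : K * d < 1)) ?ler_wpM2r ?lerDl; lra.
- move=> v /andP[v1 v2]; apply: C_bnd; rewrite -ball_normE /= ltr_distlC.
  by apply/andP; split; lra.
- apply: continuous_subspaceW zc => v /=; rewrite !in_itv /= andbT.
  by move=> /andP[v1 _]; lra.
- by move=> v /andP[v1 _]; apply: zd; lra.
- by move=> v /andP[v1 v2]; apply: Pa; rewrite v2 andbT; lra.
Qed.

End linear_dde_uniqueness.

Lemma diff_along_bounded_near {R : realType} {N : nat} (f : 'cV[R]_N -> 'cV[R]_N)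
    (x : R -> 'cV[R]_N) (t0 : R) :
  C2 f -> continuous x ->
  exists2 C, 0 <= C & \forall u \near t0, forall w, `|'d f (x u) w| <= C * `|w|.
Proof.
move=> [fd [Dfd _]] xc.
apply: (@linear_family_bounded_near R N R _ (fun u => 'd f (x u)) t0) => i.
have -> : (fun u => 'd f (x u) (delta_mx i 0)) = 'D_(delta_mx i 0) f \o x.
  by apply: funext => u /=; rewrite deriveE.
exact: continuous_comp (xc t0) (differentiable_continuous (Dfd _ _)).
Qed.

Section dde_solutions.
Context {R : realType} {N : nat}.
Variables (f : 'cV[R]_N -> 'cV[R]_N) (x : R -> 'cV[R]_N) (b : R) (h : 'M[R]_N) (th : R).
Implicit Types (phi y : R -> 'cV[R]_N) (s t : R).

Local Notation solves := (dde_solution f x b h th).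

Lemma dde_solution_history_continuous s phi y :
  solves s phi y -> {within `[- th, 0], continuous phi}.
Proof.
move=> [yc yh _].
have shifted_c : {within `[- th, 0], continuous (fun v => y (v + s))}.
  apply: continuous_subspaceW (continuous_within_shift (tau := s) yc).
  by move=> v /=; rewrite !in_itv /= andbT => /andP[v1 _]; lra.
apply: subspace_eq_continuous shifted_c => v /[!inE] /= /[!in_itv] /= vin.
by change (y (v + s) = phi v); rewrite addrC yh.
Qed.

Lemma dde_solution_eq_history s phi1 phi2 y :
  solves s phi1 y -> (forall v, - th <= v <= 0 -> phi1 v = phi2 v) ->
  solves s phi2 y.
Proof. by move=> [yc yh yd] phiE; split=> // v vin; rewrite yh ?phiE. Qed.

Lemma dde_solution_restart s r phi y :
  s <= r -> solves s phi y -> solves r (fun v => y (r + v)) y.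
Proof.
move=> sr [yc _ yd]; split=> [||t rt].
- apply: continuous_subspaceW yc => u /=; rewrite !in_itv /= !andbT; lra.
- by [].
- by apply: yd; lra.
Qed.

Lemma dde_solution_transform (g : 'M[R]_N) tau s phi y :
  (forall v, differentiable f v) -> (forall v, f (g *m v) = g *m f v) ->
  g *m h = h *m g -> (forall t, g *m x (t + tau) = x t) ->
  solves s phi y -> solves (s - tau) (fun v => g *m phi v) (fun t => g *m y (t + tau)).
Proof.
move=> fd fg gh gx [yc yh yd]; split=> [||t st].
- have gyc := within_continuous_comp _ _ _ (in1W (@mulmx_continuous R N N 1 g))
    (continuous_within_shift (tau := tau) yc).
  apply: continuous_subspaceW gyc => u /=; rewrite !in_itv /= !andbT; lra.
- by move=> v vin; rewrite -yh //; congr (_ *m y _); lra.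
have st' : s < t + tau by lra.
have gyd := is_derive_mulmx_shift g (yd _ st').
suff rhsE : g *m ('d f (x (t + tau)) (y (t + tau)) +
    b *: (y (t + tau) - h *m y (t + tau - th))) =
  'd f (x t) (g *m y (t + tau)) +
    b *: (g *m y (t + tau) - h *m (g *m y (t - th + tau))).
  rewrite rhsE in gyd; exact gyd.
rewrite mulmxDr; congr (_ + _).
  by rewrite -(gx t); exact: esym (diff_equivariant _ _ fg fd).
by rewrite -scalemxAr mulmxBr !mulmxA gh [t - th + tau]addrAC.
Qed.

Hypotheses (th_gt0 : 0 < th) (f_C2 : C2 f) (x_cont : continuous x).

Lemma dde_solution_unique s phi y1 y2 :
  solves s phi y1 -> solves s phi y2 -> forall t, s - th <= t -> y1 t = y2 t.
Proof.
move=> [y1c y1h y1d] [y2c y2h y2d] t st; apply/eqP; rewrite -subr_eq0; apply/eqP.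
apply: (@dde_zero_history_unique R N (fun u => 'd f (x u)) b h th
  (fun u => y1 u - y2 u) s th_gt0) st.
- by move=> t0; exact: diff_along_bounded_near.
- exact: within_continuousB.
- move=> u /andP[u1 u2]; have uin : - th <= u - s <= 0 by apply/andP; split; lra.
  by rewrite -[u](subrK s) [_ + s]addrC y1h // y2h // subrr.
move=> u su; have := is_deriveB (y1d u su) (y2d u su).
rewrite opprD addrACA -scalerBr opprD addrACA -opprD -linearB -mulmxBr.
by move=> yd; exact yd.
Qed.

Lemma solution_operatorE U t s phi y :
  solution_operators f x b h th U -> solves s phi y -> s <= t ->
  forall v, - th <= v <= 0 -> U t s phi v = y (t + v).
Proof.
move=> HU ysol st v /andP[v1 v2].
have [yU [yUsol yUE]] := HU t s phi st (dde_solution_history_continuous ysol).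
by rewrite yUE ?v1 ?v2 //; apply: (dde_solution_unique yUsol ysol); lra.
Qed.

Lemma iter_twisted_solution_operator U (g : 'M[R]_N) T phi Y :
  solution_operators f x b h th U -> 0 <= T ->
  (forall v, f (g *m v) = g *m f v) -> g *m h = h *m g ->
  (forall t, g *m x (t + T) = x t) ->
  solves 0 phi Y ->
  forall k, solves 0 (iter k (fun psi v => g *m U T 0 psi v) phi)
    (fun t => g ^+ k *m Y (t + k%:R * T)).
Proof.
move=> HU T0 fg gh gx Ysol; elim=> [|k IHk].
  have -> : (fun t => g ^+ 0 *m Y (t + 0%:R * T)) = Y.
    by apply: funext => t; rewrite expr0 mul1mx mul0r addr0.
  exact: Ysol.
have fd : forall v, differentiable f v by case: f_C2.
have := dde_solution_transform fd fg gh gx (dde_solution_restart T0 IHk).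
rewrite subrr => gzsol.
have -> : (fun t => g ^+ k.+1 *m Y (t + k.+1%:R * T))
    = (fun t => g *m (g ^+ k *m Y (t + T + k%:R * T))).
  by apply: funext => t; rewrite mulmxA mulmxE -exprS mulrSr mulrDl mul1r addrAC addrA.
apply: dde_solution_eq_history gzsol _ => v vin.
by rewrite iterS (solution_operatorE HU IHk T0 vin) addrC.
Qed.

Lemma iter_twisted_solution_operatorE U (g : 'M[R]_N) T phi Y :
  solution_operators f x b h th U -> 0 <= T ->
  (forall v, f (g *m v) = g *m f v) -> g *m h = h *m g ->
  (forall t, g *m x (t + T) = x t) ->
  solves 0 phi Y ->
  forall k v, - th <= v <= 0 ->
    iter k (fun psi v => g *m U T 0 psi v) phi v = g ^+ k *m Y (k%:R * T + v).
Proof.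
move=> HU T0 fg gh gx Ysol k v vin.
have [_ hist _] := iter_twisted_solution_operator HU T0 fg gh gx Ysol k.
by rewrite -hist // add0r addrC.
Qed.

Lemma iter_solution_operatorE U T phi Y :
  solution_operators f x b h th U -> 0 <= T -> (forall t, x (t + T) = x t) ->
  solves 0 phi Y ->
  forall k v, - th <= v <= 0 -> iter k (U T 0) phi v = Y (k%:R * T + v).
Proof.
move=> HU T0 x_per Ysol k v vin.
have one_eqv w : f (1%:M *m w) = 1%:M *m f w by rewrite !mul1mx.
have one_comm : 1%:M *m h = h *m 1%:M by rewrite mul1mx mulmx1.
have one_shift t : 1%:M *m x (t + T) = x t by rewrite mul1mx x_per.
have -> : U T 0 = (fun psi w => 1%:M *m U T 0 psi w).
  by apply: funext => psi; apply: funext => w; rewrite mul1mx.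
rewrite (iter_twisted_solution_operatorE HU T0 one_eqv one_comm one_shift Ysol) //.
by rewrite expr1n mul1mx.
Qed.

End dde_solutions.

Unset Implicit Arguments.

Theorem lemma3p2 (R : realType) (N : nat) (Gamma : set 'M[R]_N)
    (f : 'cV[R]_N -> 'cV[R]_N) (xstar : R -> 'cV[R]_N) (p : R) (n : nat)
    (h : 'M[R]_N) (b : R) (m : nat) (theta_h : R)
    (U : R -> R -> (R -> 'cV[R]_N) -> (R -> 'cV[R]_N)) :
  compact_subgroup_ON Gamma ->
  C2 f ->
  equivariant Gamma f ->
  periodic_solution f xstar p ->
  discrete_wave Gamma xstar n ->
  Hgrp Gamma xstar h ->
  is_theta xstar p h theta_h ->
  (1 <= m <= n)%N ->
  theta_h = m%:R / n%:R * p ->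
  solution_operators f xstar b h theta_h U ->
  let Uh := fun phi : R -> 'cV[R]_N =>
              (fun v => invmx h *m U (m%:R / n%:R * p) 0 phi v) in
  forall phi : R -> 'cV[R]_N, {within `[- theta_h, 0], continuous phi} ->
  forall v, - theta_h <= v <= 0 ->
    iter m (U p 0) phi v = (h ^+ n) *m (iter n Uh phi v).
Proof.
move=> [G_orth _ _ G_inv _] f_C2 f_eqv [p_gt0 x_deriv x_per _] _ [Gh _] [_ h_shift]
  /andP[m_ge1 m_le_n] thE HU Uh phi phi_c v v_in.
have n_gt0 : (0 < n)%N by apply: leq_trans m_le_n.
have th_gt0 : 0 < theta_h by rewrite thE !mulr_gt0 ?invr_gt0 ?ltr0n.
have h_unit : h \in unitmx by have [] := mulmx1_unit (G_orth h Gh).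
have x_cont : continuous xstar.
  by move=> t; apply/differentiable_continuous/derivable1_diffP; case: (x_deriv t).
have [Y [Y_sol _]] := HU 0 0 phi (lexx 0) phi_c.
have -> : Uh = (fun psi w => invmx h *m U theta_h 0 psi w) by rewrite /Uh thE.
have hinv_eqv w : f (invmx h *m w) = invmx h *m f w by apply: f_eqv; exact: G_inv.
have hinv_comm : invmx h *m h = h *m invmx h by rewrite mulVmx // mulmxV.
have hinv_shift t : invmx h *m xstar (t + theta_h) = xstar t.
  by rewrite -h_shift mulKmx.
rewrite (iter_solution_operatorE th_gt0 f_C2 x_cont HU (ltW p_gt0) x_per Y_sol) //.
rewrite (iter_twisted_solution_operatorE th_gt0 f_C2 x_cont HU (ltW th_gt0)
  hinv_eqv hinv_comm hinv_shift Y_sol) //.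
rewrite mulmxA mulmxE mulmx_exp_invmx // mul1mx thE.
by rewrite mulrA mulrCA divff ?mulr1 // pnatr_eq0 -lt0n.
Qed.
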